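(* Let $R$ be a (not necessarily commutative) local ring with maximal ideal $\mathfrak{m}$, separated and complete for the $\mathfrak{m}$-adic topology, $\sigma:R\to R$ a ring automorphism with $\sigma(\mathfrak{m})=\mathfrak{m}$, and $\delta:R\to R$ a $\sigma$-derivation with $\delta(R)\subseteq\mathfrak{m}$ and $\delta(\mathfrak{m})\subseteq\mathfrak{m}^2$. Let $A=R[[X;\sigma,\delta]]$ and let $f\in A$ have finite reduced order $s=\mathrm{ord}^{red}(f)<\infty$. Then $A$ is the direct sum of left $R$-modules $$A=Af\oplus\bigoplus_{i=0}^{s-1}RX^i.$$
   Context: A $\sigma$-derivation is an additive map with $\delta(rs)=\delta(r)s+\sigma(r)\delta(s)$. $R[[X;\sigma,\delta]]$ is the skew power series ring whose elements are formal series $\sum_{n\ge0}r_nX^n$ ($r_n\in R$), with multiplication determined by $Xr=\sigma(r)X+\delta(r)$ (well defined by the hypotheses on $\sigma,\delta$ and completeness). For $f=\sum a_iX^i\in A$, $\mathrm{ord}^{red}(f)=\min\{i: a_i\in R^\times\}$. *)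

From HB Require Import structures.
From mathcomp Require Import all_boot all_order all_algebra.
From Stdlib Require Import ClassicalEpsilon.
Set Implicit Arguments. Unset Strict Implicit. Unset Printing Implicit Defensive.
Import GRing.Theory.
Local Open Scope ring_scope.

Section SkewPowerSeries.
Variable R : unitRingType.

(* The maximal ideal of a (noncommutative) local ring: the set of non-units
   (two-sided invertibility, as in mathcomp's unitRingType). *)
Definition maxid : pred R := fun x => x \isn't a GRing.unit.

(* R is local: the non-units form an (additively closed, hence two-sided) ideal. *)
Definition is_local : Prop := forall x y, maxid x -> maxid y -> maxid (x + y).

(* mpow n x  <->  x lies in m^n, the additive span of products a_1 ... a_n, a_i in m
   (m^0 = R). *)
Inductive mpow : nat -> R -> Prop :=
| mpow_0 x : mpow 0 x
| mpow_mul n a b : maxid a -> mpow n b -> mpow n.+1 (a * b)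
| mpow_add n x y : mpow n.+1 x -> mpow n.+1 y -> mpow n.+1 (x + y).

Definition madic_lim (u : nat -> R) (L : R) : Prop :=
  forall k, exists N, forall i, (N <= i)%N -> mpow k (u i - L).
Definition madic_cauchy (u : nat -> R) : Prop :=
  forall k, exists N, forall i j, (N <= i)%N -> (N <= j)%N -> mpow k (u i - u j).
Definition madic_separated : Prop := forall x, (forall k, mpow k x) -> x = 0.
Definition madic_complete : Prop :=
  forall u, madic_cauchy u -> exists L, madic_lim u L.

(* the m-adic limit of a sequence (unique when R is separated) *)
Definition mlim (u : nat -> R) : R := epsilon (inhabits 0) (madic_lim u).

Definition sigma_derivation (sigma delta : R -> R) : Prop :=
  (forall x y, delta (x + y) = delta x + delta y) /\
  (forall r s, delta (r * s) = delta r * s + sigma r * delta s).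

Definition series := nat -> R.

(* xpow_coef sigma delta n r k = coefficient of X^k in X^n r,
   computed from X r = sigma(r) X + delta(r). *)
Fixpoint xpow_coef (sigma delta : R -> R) (n : nat) (r : R) (k : nat) : R :=
  match n with
  | 0 => if k is 0 then r else 0
  | n'.+1 => (if k is k'.+1 then sigma (xpow_coef sigma delta n' r k') else 0)
             + delta (xpow_coef sigma delta n' r k)
  end.

(* Product in R[[X; sigma, delta]]:
   (sum_i a_i X^i)(sum_j b_j X^j) = sum_{i,j} a_i (X^i b_j) X^j,
   coefficient of X^n = sum_{j<=n} sum_{i>=0} a_i [X^(n-j)](X^i b_j),
   the inner (infinite) sum being an m-adic limit of partial sums. *)
Definition smul (sigma delta : R -> R) (a b : series) : series :=
  fun n => \sum_(j < n.+1)
             mlim (fun N => \sum_(i < N) a i * xpow_coef sigma delta i (b j) (n - j)).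

Definition sadd (a b : series) : series := fun n => a n + b n.

Definition ord_red_eq (f : series) (s : nat) : Prop :=
  f s \is a GRing.unit /\ (forall i, (i < s)%N -> maxid (f i)).

End SkewPowerSeries.

From HB Require Import structures.
From mathcomp Require Import all_boot all_order all_algebra.
From mathcomp Require Import zify.
From Stdlib Require Import ClassicalEpsilon FunctionalExtensionality.
Set Implicit Arguments. Unset Strict Implicit. Unset Printing Implicit Defensive.
Import GRing.Theory.
Local Open Scope ring_scope.

(* Let [c i n] be the coefficient of [X^n] in [X^i f]. As [delta] maps [m^a]
   into [m^(a+1)], [c i n] lies in [m^(i-n)], it lies in [m] when [n < i + s],
   and [c k (k+s)] is a unit because [f_s] is.  Hence, modulo [m], the
   coefficients of [g f] in degrees [k + s] form a triangular system in [g]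
   with unit diagonal, while degrees [< s] are taken up by the polynomial part:
   any [h] with coefficients in [m^t] equals [g f + p] up to an error in
   [m^(t+1)], with [g] in [m^t] and [deg p < s].  Iterating and summing
   [m]-adically gives the decomposition.  For uniqueness, if [g f] vanishes in
   degrees [>= s], the same triangularity shows that [g] lies in every [m^t],
   so [g = 0] since [R] is separated. *)

Section LocalRing.
Variable R : unitRingType.
Hypothesis loc : is_local R.

Lemma maxid0 : maxid (0 : R).
Proof. by rewrite /maxid unitr0. Qed.

Lemma maxidN (x : R) : maxid (- x) = maxid x.
Proof. by rewrite /maxid unitrN. Qed.

Lemma unitrD_maxid (u x : R) :
  u \is a GRing.unit -> maxid x -> u + x \is a GRing.unit.
Proof.
move=> Uu mx; apply/negPn/negP => m_ux.
by have := loc m_ux (etrans (maxidN x) mx); rewrite /maxid addrK Uu.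
Qed.

(* [r * x] is idempotent, and the only idempotents of a local ring are 0 and 1. *)
Lemma unitr_of_rinv (x r : R) : x * r = 1 -> x \is a GRing.unit.
Proof.
move=> xr1; set e := r * x.
have ee : e * e = e by rewrite /e mulrA -(mulrA r) xr1 mulr1.
have [Ue | nUe] := boolP (e \is a GRing.unit).
  have e1 : e = 1 by rewrite -[e](mulKr Ue) ee mulVr.
  by apply/unitrP; exists r.
have m1e : maxid (1 - e).
  apply/negP => U1e; have : x * (1 - e) = 0.
    by rewrite mulrBr mulr1 /e mulrA xr1 mul1r subrr.
  move/(congr1 (fun y => y / (1 - e))); rewrite mulrK // mul0r => x0.
  by move: xr1; rewrite x0 mul0r => /esym/eqP; rewrite oner_eq0.
by have := loc nUe m1e; rewrite /maxid addrC subrK unitr1.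
Qed.

Lemma maxidMr (x y : R) : maxid x -> maxid (x * y).
Proof.
move=> mx; apply/negP => /unitrP [u [_ xyu]]; move/negP: mx; apply.
by apply: (@unitr_of_rinv _ (y * u)); rewrite mulrA.
Qed.

Lemma maxidMl (x y : R) : maxid x -> maxid (y * x).
Proof.
move=> mx; apply/negP => /unitrP [u [uyx _]]; move/negP: mx; apply.
have Uuy : u * y \is a GRing.unit by apply: (@unitr_of_rinv _ x); rewrite -mulrA.
have -> : x = (u * y)^-1.
  by rewrite -[x]mul1r -(mulVr Uuy) -mulrA -(mulrA u) uyx mulr1.
by rewrite unitrV.
Qed.

Lemma mpow_zero n : mpow n (0 : R).
Proof.
elim: n => [|n IHn]; first exact: mpow_0.
by rewrite -(mul0r 0); apply: mpow_mul => //; exact: maxid0.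
Qed.

Lemma mpowD n (x y : R) : mpow n x -> mpow n y -> mpow n (x + y).
Proof. by case: n => [|n] mx my; [exact: mpow_0 | exact: mpow_add]. Qed.

Lemma mpowN n (x : R) : mpow n x -> mpow n (- x).
Proof.
elim=> [z|k a b ma mb _|k a b _ IHa _ IHb]; first exact: mpow_0.
  by rewrite -mulNr; apply: mpow_mul; rewrite ?maxidN.
by rewrite opprD; apply: mpow_add.
Qed.

Lemma mpowB n (x y : R) : mpow n x -> mpow n y -> mpow n (x - y).
Proof. by move=> mx /mpowN; apply: mpowD. Qed.

Lemma mpow_sum n I (r : seq I) (P : pred I) (F : I -> R) :
  (forall i, P i -> mpow n (F i)) -> mpow n (\sum_(i <- r | P i) F i).
Proof.
move=> mF; elim/big_rec: _ => [|i y Pi my]; first exact: mpow_zero.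
by apply: mpowD => //; apply: mF.
Qed.

Lemma mpowMr n (x y : R) : mpow n x -> mpow n (x * y).
Proof.
move=> mx; elim: mx y => [z|k a b ma _ IH|k a b _ IHa _ IHb] y.
- exact: mpow_0.
- by rewrite -mulrA; apply: mpow_mul.
- by rewrite mulrDl; apply: mpow_add.
Qed.

Lemma mpowMl n (x y : R) : mpow n x -> mpow n (y * x).
Proof.
move=> mx; elim: mx y => [z|k a b ma mb IH|k a b _ IHa _ IHb] y.
- exact: mpow_0.
- by rewrite mulrA; apply: mpow_mul => //; apply: maxidMl.
- by rewrite mulrDr; apply: mpow_add.
Qed.

Lemma mpowM m n (x y : R) : mpow m x -> mpow n y -> mpow (m + n) (x * y).
Proof.
move=> mx; elim: mx n y => [z|k a b ma _ IH|k a b _ IHa _ IHb] n y my.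
- by rewrite add0n; apply: mpowMl.
- by rewrite addSn -mulrA; apply: mpow_mul => //; apply: IH.
- by rewrite mulrDl addSn; apply: mpow_add; rewrite -addSn; [apply: IHa | apply: IHb].
Qed.

Lemma mpow_pred n (x : R) : mpow n x -> mpow n.-1 x.
Proof.
elim=> [z|k a b ma _ IH|k a b _ IHa _ IHb]; first exact: mpow_0.
  by case: k IH => [|k] IH /=; [exact: mpow_0 | exact: mpow_mul].
exact: mpowD.
Qed.

Lemma mpow_le m n (x : R) : (m <= n)%N -> mpow n x -> mpow m x.
Proof.
move=> /subnK <-; elim: (n - m)%N => [|d IHd] //= mx.
by apply: IHd; apply: (mpow_pred mx).
Qed.

Lemma mpow1 (x : R) : mpow 1 x <-> maxid x.
Proof.
split=> [|mx]; last by rewrite -[x]mulr1; apply: mpow_mul => //; exact: mpow_0.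
move E : 1%N => n mx; elim: mx E => [z|k a b ma _ _|k a b _ IHa _ IHb] //= E.
  exact: maxidMr.
by apply: loc; [apply: IHa | apply: IHb].
Qed.

Section TriangularSystem.
Variables (a : nat -> nat -> R) (b : nat -> R).

Definition trisol_step (k : nat) (x : nat -> R) : R :=
  (b k - \sum_(i < k) x i * a i k) / a k k.

(* Forward substitution: only the entries [i < k] of [trisol_upto k] are meaningful. *)
Fixpoint trisol_upto (k : nat) : nat -> R :=
  if k is k'.+1 then
    fun i => if i == k' then trisol_step k' (trisol_upto k') else trisol_upto k' i
  else fun=> 0.

Definition trisol (i : nat) : R := trisol_upto i.+1 i.

Lemma trisol_uptoE k i : (i < k)%N -> trisol_upto k i = trisol i.
Proof.
elim: k => [|k IHk] //=; rewrite ltnS leq_eqVlt => /orP [/eqP ->|ltik].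
  by rewrite /trisol /= !eqxx.
by rewrite (ltn_eqF ltik) IHk.
Qed.

Lemma trisol_stepE k : trisol k = trisol_step k trisol.
Proof.
rewrite /trisol /= eqxx /trisol_step; congr ((_ - _) / _).
by apply: eq_bigr => i _; rewrite trisol_uptoE.
Qed.

Lemma trisolP k : a k k \is a GRing.unit ->
  \sum_(i < k.+1) trisol i * a i k = b k.
Proof.
by move=> Uakk; rewrite big_ord_recr /= trisol_stepE /trisol_step mulrVK // addrC subrK.
Qed.

Lemma trisol_mpow t : (forall k, mpow t (b k)) -> forall i, mpow t (trisol i).
Proof.
move=> mb; elim/ltn_ind => i IH; rewrite trisol_stepE; apply/mpowMr/mpowB => //.
by apply: mpow_sum => j _; apply/mpowMr/IH.
Qed.

End TriangularSystem.

Hypothesis sep : madic_separated R.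
Hypothesis comp : madic_complete R.

Lemma madic_lim_unique u (L L' : R) : madic_lim u L -> madic_lim u L' -> L = L'.
Proof.
move=> uL uL'; apply/eqP; rewrite -subr_eq0; apply/eqP/sep => k.
have [N HN] := uL k; have [N' HN'] := uL' k.
have := mpowB (HN' (maxn N N') (leq_maxr _ _)) (HN (maxn N N') (leq_maxl _ _)).
by rewrite opprB addrC addrA subrK.
Qed.

Lemma mlimE u (L : R) : madic_lim u L -> mlim u = L.
Proof.
move=> uL; apply: (madic_lim_unique _ uL).
by apply: epsilon_spec; exists L.
Qed.

Lemma eq_madic_lim u v (L : R) :
  (forall i, u i = v i) -> madic_lim u L -> madic_lim v L.
Proof. by move=> uv uL k; have [N HN] := uL k; exists N => i; rewrite -uv; apply: HN. Qed.

Lemma madic_limD u v (L L' : R) : madic_lim u L -> madic_lim v L' ->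
  madic_lim (fun i => u i + v i) (L + L').
Proof.
move=> uL vL' k; have [N HN] := uL k; have [N' HN'] := vL' k.
exists (maxn N N') => i; rewrite geq_max => /andP [Ni N'i].
by rewrite opprD addrACA; apply: mpowD; [apply: HN | apply: HN'].
Qed.

Lemma madic_limN u (L : R) : madic_lim u L -> madic_lim (fun i => - u i) (- L).
Proof.
by move=> uL k; have [N HN] := uL k; exists N => i Ni; rewrite -opprD; apply/mpowN/HN.
Qed.

Lemma madic_lim_sum n (u : nat -> nat -> R) (L : nat -> R) :
  (forall j, madic_lim (u j) (L j)) ->
  madic_lim (fun i => \sum_(j < n) u j i) (\sum_(j < n) L j).
Proof.
move=> uL; elim: n => [|n IHn].
  by move=> k; exists 0%N => i _; rewrite !big_ord0 subr0; apply: mpow_zero.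
rewrite big_ord_recr; apply: eq_madic_lim (madic_limD IHn (uL n)) => i.
by rewrite big_ord_recr.
Qed.

Definition madic_null (u : nat -> R) : Prop :=
  forall k, exists N, forall i, (N <= i)%N -> mpow k (u i).

Lemma madic_null_cauchy u : madic_null u -> madic_cauchy (fun N => \sum_(i < N) u i).
Proof.
move=> u0 k; have [N HN] := u0 k; exists N.
suff tail i j : (N <= i <= j)%N -> mpow k (\sum_(l < j) u l - \sum_(l < i) u l).
  move=> i j Ni Nj; case: (leqP i j) => ij.
    by rewrite -opprB; apply/mpowN/tail; rewrite Ni.
  by apply: tail; rewrite Nj ltnW.
case/andP=> Ni ij; rewrite -!(big_mkord xpredT) (big_cat_nat (leq0n i) ij) /=.
rewrite addrAC subrr add0r big_nat_cond; apply: mpow_sum => l /andP [/andP [il _] _].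
by apply: HN; apply: leq_trans il.
Qed.

Definition msum (u : nat -> R) : R := mlim (fun N => \sum_(i < N) u i).

Lemma msumP u : madic_null u -> madic_lim (fun N => \sum_(i < N) u i) (msum u).
Proof.
by move=> /madic_null_cauchy /comp [L uL]; rewrite /msum (mlimE uL).
Qed.

Lemma eq_msum u v : (forall i, u i = v i) -> msum u = msum v.
Proof. by move=> uv; congr msum; apply: functional_extensionality. Qed.

Lemma msumB u v : madic_null u -> madic_null v ->
  msum (fun i => u i - v i) = msum u - msum v.
Proof.
move=> u0 v0; apply/mlimE/(eq_madic_lim _ (madic_limD (msumP u0) (madic_limN (msumP v0)))).
by move=> N; rewrite sumrB.
Qed.

Lemma msum_sum n (u : nat -> nat -> R) : (forall j, madic_null (u j)) ->
  msum (fun i => \sum_(j < n) u j i) = \sum_(j < n) msum (u j).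
Proof.
move=> u0; apply/mlimE/(eq_madic_lim _ (madic_lim_sum n (fun j => msumP (u0 j)))).
by move=> N; rewrite exchange_big.
Qed.

Lemma msum_tail u k K : madic_null u -> (forall i, (K <= i)%N -> mpow k (u i)) ->
  mpow k (msum u - \sum_(i < K) u i).
Proof.
move=> u0 mu; have [N HN] := msumP u0 k.
have := HN (maxn N K) (leq_maxl _ _).
rewrite -!(big_mkord xpredT) (big_cat_nat (leq0n K) (leq_maxr N K)) /= => mN.
have mB : mpow k (\sum_(K <= i < maxn N K) u i).
  by rewrite big_nat_cond; apply: mpow_sum => i /andP [/andP [Ki _] _]; apply: mu.
by have := mpowD (mpowN mN) mB; rewrite opprB opprD addrA subrK.
Qed.

Lemma msum_mpow u k : madic_null u -> (forall i, mpow k (u i)) -> mpow k (msum u).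
Proof.
by move=> u0 mu; have := @msum_tail u k 0 u0 (fun i _ => mu i); rewrite big_ord0 subr0.
Qed.

Lemma msum_eq0 u : madic_null u -> (forall i, u i = 0) -> msum u = 0.
Proof.
by move=> u0 u_eq0; apply: sep => k; apply: msum_mpow => // i; rewrite u_eq0; apply: mpow_zero.
Qed.

Lemma madic_null_geometric (u : nat -> R) : (forall t, mpow t (u t)) -> madic_null u.
Proof. by move=> mu k; exists k => t kt; apply: mpow_le kt (mu t). Qed.

Section SkewPowerSeries.
Variables (sigma : {rmorphism R -> R}) (delta : R -> R).
Hypothesis sigma_maxid : forall x : R, maxid x <-> maxid (sigma x).
Hypothesis delta_der : sigma_derivation sigma delta.
Hypothesis delta_maxid : forall x : R, maxid (delta x).
Hypothesis delta_maxid2 : forall x : R, maxid x -> mpow 2 (delta x).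

Lemma sigma_mpow n x : mpow n x -> mpow n (sigma x).
Proof.
elim=> [z|k a b ma _ IH|k a b _ IHa _ IHb]; first exact: mpow_0.
  by rewrite rmorphM; apply: mpow_mul => //; apply/(sigma_maxid a).
by rewrite rmorphD; apply: mpow_add.
Qed.

Lemma delta_mpow n x : mpow n x -> mpow n.+1 (delta x).
Proof.
case: delta_der => deltaD deltaM.
elim=> [z|k a b ma mb IH|k a b _ IHa _ IHb]; first exact/mpow1.
  rewrite deltaM; apply: mpowD.
    by rewrite -add2n; apply: mpowM => //; apply: delta_maxid2.
  by apply: mpow_mul => //; apply/(sigma_maxid a).
by rewrite deltaD; apply: mpowD.
Qed.

Lemma xpow_coef_mpow n r k a :
  mpow a r -> mpow (a + (n - k)) (xpow_coef sigma delta n r k).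
Proof.
move=> mr; elim: n k => [|n IHn] [|k] /=; rewrite ?sub0n ?addn0 ?add0r //.
- exact: mpow_zero.
- by apply: mpow_le (delta_mpow (IHn 0%N)); lia.
- apply: mpowD; first by rewrite subSS; apply/sigma_mpow/IHn.
  by apply: mpow_le (delta_mpow (IHn k.+1)); lia.
Qed.

Lemma xpow_coef_unit n r :
  r \is a GRing.unit -> xpow_coef sigma delta n r n \is a GRing.unit.
Proof.
by move=> Ur; elim: n => [|n IHn] //=; apply: unitrD_maxid; rewrite ?rmorph_unit.
Qed.

Variables (f : series R) (s : nat).
Hypothesis f_ord : ord_red_eq f s.

Definition coef_Xf (i n : nat) : R :=
  \sum_(j < n.+1) xpow_coef sigma delta i (f j) (n - j).

Lemma coef_Xf_mpow i n : mpow (i - n) (coef_Xf i n).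
Proof.
apply: mpow_sum => j _.
by apply: mpow_le (xpow_coef_mpow i _ (mpow_0 (f j))); lia.
Qed.

Lemma coef_Xf_term_maxid i n j : (j <= n)%N -> (j < s)%N || (n < i + j)%N ->
  maxid (xpow_coef sigma delta i (f j) (n - j)).
Proof.
case: f_ord => _ f_maxid jn /orP [js|nij]; apply/mpow1.
  by apply: mpow_le (xpow_coef_mpow i _ (proj2 (mpow1 _) (f_maxid j js))); lia.
by apply: mpow_le (xpow_coef_mpow i _ (mpow_0 (f j))); lia.
Qed.

Lemma coef_Xf_maxid i n : (n < i + s)%N -> maxid (coef_Xf i n).
Proof.
move=> nis; apply/mpow1/mpow_sum => j _; apply/mpow1/coef_Xf_term_maxid.
  by rewrite -ltnS.
by case: (ltnP j s) => // sj; rewrite orbC (leq_trans nis) ?leq_add2l.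
Qed.

Lemma coef_Xf_unit k : coef_Xf k (k + s) \is a GRing.unit.
Proof.
have ltsks : (s < (k + s).+1)%N by rewrite ltnS leq_addl.
rewrite /coef_Xf (bigD1 (Ordinal ltsks)) //= addnK.
apply: unitrD_maxid; first by apply: xpow_coef_unit; case: f_ord.
apply/mpow1/mpow_sum => j; rewrite -val_eqE /= => neq_js.
apply/mpow1/coef_Xf_term_maxid; first by rewrite -ltnS.
by rewrite ltn_add2l -neq_ltn.
Qed.

(* The coefficients of [g f], with the order of the two summations exchanged. *)
Definition mulf (g : series R) (n : nat) : R := msum (fun i => g i * coef_Xf i n).

Lemma madic_null_mulf g n : madic_null (fun i => g i * coef_Xf i n).
Proof.
move=> k; exists (n + k)%N => i nki.
by apply/mpowMl/(mpow_le _ (coef_Xf_mpow i n)); lia.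
Qed.

Lemma smul_mulf g n : smul sigma delta g f n = mulf g n.
Proof.
rewrite /smul -(@msum_sum _ (fun j i => g i * xpow_coef sigma delta i (f j) (n - j))).
  by apply: eq_msum => i; rewrite mulr_sumr.
move=> j k; exists (n + k)%N => i nki; apply: mpowMl.
by apply: mpow_le (xpow_coef_mpow i _ (mpow_0 (f j))); lia.
Qed.

Lemma mulfB g g' n : mulf (fun i => g i - g' i) n = mulf g n - mulf g' n.
Proof.
rewrite -msumB; try exact: madic_null_mulf.
by apply: eq_msum => i; rewrite mulrBl.
Qed.

Lemma mulf_sum T (g : nat -> series R) n :
  mulf (fun i => \sum_(t < T) g t i) n = \sum_(t < T) mulf (g t) n.
Proof.
rewrite -(@msum_sum _ (fun t i => g t i * coef_Xf i n)) => [|t]; last exact: madic_null_mulf.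
by apply: eq_msum => i; rewrite mulr_suml.
Qed.

Lemma mulf_mpow g n k : (forall i, mpow k (g i)) -> mpow k (mulf g n).
Proof. by move=> mg; apply: msum_mpow => [|i]; [apply: madic_null_mulf | apply/mpowMr]. Qed.

(* For [i >= K] we have [n < i + s], so [coef_Xf i n] lies in [m]. *)
Lemma mulf_tail g n t K : (forall i, mpow t (g i)) -> (n < K + s)%N ->
  mpow t.+1 (mulf g n - \sum_(i < K) g i * coef_Xf i n).
Proof.
move=> mg nKs; apply: msum_tail => [|i Ki]; first exact: madic_null_mulf.
by rewrite -addn1; apply: mpowM => //; apply/mpow1/coef_Xf_maxid; lia.
Qed.

Lemma mulf_shift_eq0 g : (forall k, mulf g (k + s) = 0) -> forall i, g i = 0.
Proof.
move=> gf0 i; apply: sep => t; elim: t i => [|t IHt] i; first exact: mpow_0.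
elim/ltn_ind: i => i IHi.
have := mulf_tail (n := i + s) (K := i.+1) IHt (leqnn _).
rewrite gf0 sub0r big_ord_recr /= opprD => /mpowN; rewrite opprD !opprK => m_sum.
have m_lower : mpow t.+1 (\sum_(j < i) g j * coef_Xf j (i + s)).
  by apply: mpow_sum => j _; apply/mpowMr/IHi.
have := mpowMr (coef_Xf i (i + s))^-1 (mpowB m_sum m_lower).
by rewrite addrAC subrr add0r mulrK // coef_Xf_unit.
Qed.

Definition lowdeg (h : series R) : series R := fun n => if (n < s)%N then h n else 0.

Lemma lowdeg_mpow t h : (forall n, mpow t (h n)) -> forall n, mpow t (lowdeg h n).
Proof. by move=> mh n; rewrite /lowdeg; case: ifP => _; [apply: mh | apply: mpow_zero]. Qed.

(* Modulo [m], [mulf g (k + s)] is triangular in [g] with unit diagonal. *)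
Definition approx_quot (h : series R) : series R :=
  trisol (fun i k => coef_Xf i (k + s)) (fun k => h (k + s)%N).

Definition residual (h : series R) : series R :=
  fun n => h n - mulf (approx_quot h) n - lowdeg h n.

Lemma residual_mpow t h : (forall n, mpow t (h n)) -> forall n, mpow t.+1 (residual h n).
Proof.
move=> mh n; have mq := trisol_mpow (fun i k => coef_Xf i (k + s)) (fun k => mh (k + s)%N).
rewrite /residual /lowdeg; case: ltnP => [ns|sn].
  have := mulf_tail (K := 0) mq ns; rewrite big_ord0 subr0.
  by rewrite addrAC subrr add0r; apply: mpowN.
rewrite subr0 -(subnK sn) -opprB; apply: mpowN.
have := mulf_tail (K := (n - s).+1) mq (leqnn _).
by rewrite trisolP // coef_Xf_unit.
Qed.

Lemma iter_residual_mpow h t n : mpow t (iter t residual h n).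
Proof. by elim: t n => [|t IHt] n; [exact: mpow_0 | apply: residual_mpow]. Qed.

Lemma residual_telescope h T n :
  h n - \sum_(t < T) (mulf (approx_quot (iter t residual h)) n
                      + lowdeg (iter t residual h) n) = iter T residual h n.
Proof.
elim: T => [|T IHT]; first by rewrite big_ord0 subr0.
by rewrite big_ord_recr opprD addrA IHT /residual opprD addrA.
Qed.

Lemma exists_Af_lowdeg_decomposition h : exists g p : series R,
  (forall i, (s <= i)%N -> p i = 0) /\ h = sadd (smul sigma delta g f) p.
Proof.
pose q t := approx_quot (iter t residual h); pose r t := lowdeg (iter t residual h).
have mq t i : mpow t (q t i) by apply: trisol_mpow => k; apply: iter_residual_mpow.
have mr t n : mpow t (r t n) by apply: lowdeg_mpow => m; apply: iter_residual_mpow.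
have q0 i : madic_null (q ^~ i) by apply: madic_null_geometric.
have r0 n : madic_null (r ^~ n) by apply: madic_null_geometric.
exists (fun i => msum (q ^~ i)), (fun n => msum (r ^~ n)); split=> [n sn|].
  by apply: msum_eq0 => // t; rewrite /r /lowdeg ltnNge sn.
apply: functional_extensionality => n; rewrite /sadd smul_mulf.
apply/eqP; rewrite -subr_eq0; apply/eqP/sep => T.
rewrite -(subrKA (\sum_(t < T) (mulf (q t) n + r t n))) residual_telescope.
apply: mpowD (iter_residual_mpow h T n) _; rewrite -opprB; apply: mpowN.
rewrite big_split /= opprD addrACA -mulf_sum -mulfB; apply: mpowD.
  by apply: mulf_mpow => i; apply: msum_tail => // t /mpow_le; apply.
by apply: msum_tail => // t /mpow_le; apply.
Qed.

Lemma Af_lowdeg_decomposition_unique (g1 p1 g2 p2 : series R) :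
  (forall i, (s <= i)%N -> p1 i = 0) -> (forall i, (s <= i)%N -> p2 i = 0) ->
  sadd (smul sigma delta g1 f) p1 = sadd (smul sigma delta g2 f) p2 ->
  smul sigma delta g1 f = smul sigma delta g2 f /\ p1 = p2.
Proof.
move=> p1_low p2_low E12.
have E n : mulf g1 n + p1 n = mulf g2 n + p2 n.
  by have := congr1 (fun h => h n) E12; rewrite /sadd !smul_mulf.
have g12 : g1 = g2.
  apply: functional_extensionality => i; apply/eqP; rewrite -subr_eq0; apply/eqP.
  apply: (@mulf_shift_eq0 (fun i => g1 i - g2 i)) => k; rewrite mulfB.
  by have := E (k + s)%N; rewrite p1_low ?p2_low ?leq_addl // !addr0 => ->; rewrite subrr.
subst g2; split=> //; apply: functional_extensionality => n.
exact: addrI (E n).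
Qed.

End SkewPowerSeries.
End LocalRing.

Theorem mainTheorem5 (R : unitRingType) (sigma : {rmorphism R -> R})
    (delta : R -> R) (f : series R) (s : nat) :
  is_local R -> madic_separated R -> madic_complete R ->
  bijective sigma ->
  (forall x : R, maxid x <-> maxid (sigma x)) ->
  sigma_derivation sigma delta ->
  (forall x : R, maxid (delta x)) ->
  (forall x : R, maxid x -> mpow 2 (delta x)) ->
  ord_red_eq f s ->
  (* A = Af + (+)_{i<s} R X^i *)
  (forall h : series R, exists (g p : series R),
      (forall i, (s <= i)%N -> p i = 0) /\ h = sadd (smul sigma delta g f) p) /\
  (* the sum is direct: components are unique *)
  (forall g1 p1 g2 p2 : series R,
      (forall i, (s <= i)%N -> p1 i = 0) ->
      (forall i, (s <= i)%N -> p2 i = 0) ->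
      sadd (smul sigma delta g1 f) p1 = sadd (smul sigma delta g2 f) p2 ->
      smul sigma delta g1 f = smul sigma delta g2 f /\ p1 = p2).
Proof.
move=> loc sep comp _ sigma_maxid delta_der delta_maxid delta_maxid2 f_ord.
split; [exact: exists_Af_lowdeg_decomposition | exact: Af_lowdeg_decomposition_unique].
Qed.
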